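(* Let $d\ge0$ and $\alpha_{d+1}>0$. For the Gaussian broadcast model on $P=\mathcal{HS}_{d+1}$, local reconstruction is possible if and only if single-vertex reconstruction is possible.
   Context: Gaussian broadcast model: Let $d\ge 0$ and let $P$ be an infinite graded poset with layers $L_0,L_1,\dots$ ($L_t$ = elements of rank $t$, $L_0$ = minimal elements), in which every element covers at most $d+1$ elements. For $v\in P$ let $\mathfrak p(v)$ be the set of elements covered by $v$. Given $\alpha_1,\dots,\alpha_{d+1}>0$, let $X_0\sim\mathcal N(0,1)$ and, independently, let $W_{u\to v}$ be i.i.d. $\mathcal N(0,1)$ indexed by covering pairs $u\lessdot v$. Set $X_v=X_0$ for $v\in L_0$, and for $v$ of rank $\ge1$ set $X_v=\alpha_{|\mathfrak p(v)|}\sum_{u\in\mathfrak p(v)}(X_u+W_{u\to v})$. Infinite model: $\mathcal{HS}_{d+1}=\{(x_1,\dots,x_{d+1})\in\mathbb Z^{d+1}: x_1+\dots+x_{d+1}\ge0\}$ with $u\le v$ iff $v-u\in\mathbb Z_{\ge0}^{d+1}$; $L_t$ is the set of points with coordinate sum $t$; every element of rank $\ge1$ covers exactly $d+1$ elements. A window of width $N$ is a set $\big([x_1,x_1+N)\times\cdots\times[x_{d+1},x_{d+1}+N)\big)\cap P$ with $x_i\in\mathbb Z$. Local reconstruction is possible if there exist a finite $N$, windows $\mathcal W_t$ ($t\ge0$) of width $N$, and $c:P\to\mathbb R$ with $c|_{L_t}$ supported on $\mathcal W_t$, such that $\zeta_t:=\sum_{u\in L_t}c_uX_u$ satisfies $\operatorname{Var}(\zeta_t)>0$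 for all $t$ and $\operatorname{corr}(\zeta_t,X_0)$ does not converge to $0$ as $t\to\infty$. Single-vertex reconstruction is possible if this can be done with $N=1$. *)

From HB Require Import structures.
From mathcomp Require Import all_boot all_order all_algebra.
From mathcomp Require Import all_classical all_reals all_analysis.
Set Implicit Arguments. Unset Strict Implicit. Unset Printing Implicit Defensive.
Import Order.TTheory GRing.Theory Num.Theory numFieldNormedType.Exports.
Local Open Scope ring_scope.
Local Open Scope classical_set_scope.

Definition pt (d : nat) := {ffun 'I_d.+1 -> int}.

Definition rank d (x : pt d) : int := \sum_(i < d.+1) x i.

Definition inHS d (x : pt d) : Prop := 0 <= rank x.

(* v - e_i : the elements covered by v (rank v >= 1) are exactly the v - e_i. *)
Definition down d (v : pt d) (i : 'I_d.+1) : pt d :=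
  [ffun j => v j - (j == i)%:Z].

(* Sources of randomness of the Gaussian broadcast model:
   None        ~ X_0,
   Some (v,i)  ~ W_{(v - e_i) -> v}, the noise on the covering pair v-e_i <. v. *)
Definition src d := option (pt d * 'I_d.+1)%type.

(* A centred jointly Gaussian variable that is a (finite) linear combination of
   the independent standard normals X_0, W_e is represented by its coefficient
   vector f : src d -> R (Gaussian Hilbert space). *)
Definition cov {R : realType} d (f g : src d -> R) : R :=
  (\sum_(s \in [set: src d]) f s * g s)%R.
Definition var {R : realType} d (f : src d -> R) : R := cov f f.
Definition corr {R : realType} d (f g : src d -> R) : R :=
  cov f g / Num.sqrt (var f * var g).

Definition X0 {R : realType} d : src d -> R :=
  fun s => if s is None then 1 else 0.
Definition Wn {R : realType} d (v : pt d) (i : 'I_d.+1) : src d -> R :=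
  fun s => if s == Some (v, i) then 1 else 0.

(* X_v for v of rank n, by recursion on the rank: X_v = X_0 on L_0 and
   X_v = alpha_{|p(v)|} * sum_{u in p(v)} (X_u + W_{u->v}); in HS_{d+1}
   |p(v)| = d+1 for every v of rank >= 1. *)
Fixpoint Xn {R : realType} d (alpha : nat -> R) (n : nat) (v : pt d)
  : src d -> R :=
  match n with
  | 0 => @X0 R d
  | n'.+1 => fun s => alpha d.+1 *
      \sum_(i < d.+1) (@Xn R d alpha n' (down v i) s + Wn v i s)
  end.

Definition Xv {R : realType} d (alpha : nat -> R) (v : pt d) : src d -> R :=
  Xn alpha `|rank v|%N v.

Definition inWindow d (N : nat) (x : pt d) (u : pt d) : Prop :=
  inHS u /\ forall i, x i <= u i < x i + N%:Z.

Definition layer d (t : nat) : set (pt d) := [set u | rank u = t%:Z].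

Definition zeta {R : realType} d (alpha : nat -> R) (c : pt d -> R) (t : nat)
  : src d -> R :=
  fun s => (\sum_(u \in @layer d t) c u * Xv alpha u s)%R.

Definition reconstruct_width {R : realType} d (alpha : nat -> R) (N : nat) : Prop :=
  exists (W : nat -> pt d) (c : pt d -> R),
    (forall t u, @layer d t u -> ~ inWindow N (W t) u -> c u = 0) /\
    (forall t, 0 < var (zeta alpha c t)) /\
    ~ ((fun t => corr (zeta alpha c t) (@X0 R d)) @ \oo --> (0 : R)).

Definition local_reconstruction {R : realType} d (alpha : nat -> R) : Prop :=
  exists N : nat, @reconstruct_width R d alpha N.

Definition single_vertex_reconstruction {R : realType} d (alpha : nat -> R) : Prop :=
  @reconstruct_width R d alpha 1.

From Pilot Require Import Defs.
From HB Require Import structures.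
From mathcomp Require Import all_boot all_order all_algebra.
From mathcomp Require Import all_classical all_reals all_analysis.
From mathcomp Require Import ring lra zify.
Import Order.TTheory GRing.Theory Num.Theory numFieldNormedType.Exports.
Set Implicit Arguments. Unset Strict Implicit. Unset Printing Implicit Defensive.
Local Open Scope ring_scope.

(* Write
   a = alpha_{d+1}, A = a^2 and B = (a(d+1))^2.  A combination zeta = sum_u c_u X_u of vertices
   of rank t has Cov(zeta, X_0) = (a(d+1))^t S and
     Var zeta = B^t S^2 + (d+1) sum_{k<t} A^{k+1} Q_k,
   where S = sum_u c_u, Q_k = sum_{u,u'} c_u c_u' G_k(u,u') and G_k(u,u') counts the pairs of
   k-step descending paths from u and u' with a common end; G_k is a positive semidefinite kernel.
   Hence corr(zeta_t, X_0)^2 <= C corr(X_{t e_0}, X_0)^2 for every windowed zeta_t suffices.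
   For B <> 1 this follows from Q_0 = sum_u c_u^2 >= S^2 / N^{d+1} and a geometric bound on the
   single-vertex noise.  At B = 1 the sequence A^k G_k(u,u) telescopes, so moving one unit
   between two coordinates costs a bounded defect sum_k A^{k+1} (G_k(u,u) - G_k(u,u')); two
   points of a window are boundedly many such moves apart, and this compares the noise of zeta_t
   with that of a single vertex. *)

(** * Descending paths in Z^{d+1} *)

Section Lattice.
Variable d : nat.
Implicit Types (u v w y : pt d) (i j : 'I_d.+1).

Definition ev i : pt d := [ffun l => (l == i)%:Z].

Lemma downE v i : Defs.down v i = v - ev i.
Proof. by apply/ffunP => l; rewrite !ffunE. Qed.

Lemma rankD u v : rank (u + v) = rank u + rank v.
Proof. by rewrite /rank -big_split; apply: eq_bigr => l _; rewrite ffunE. Qed.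

Lemma rankB u v : rank (u - v) = rank u - rank v.
Proof. by rewrite /rank -sumrB; apply: eq_bigr => l _; rewrite !ffunE. Qed.

Lemma rank_ev i : rank (ev i) = 1.
Proof.
rewrite /rank (bigD1 i) //= ffunE eqxx big1 ?addr0 // => j /negbTE ji.
by rewrite ffunE ji.
Qed.

Lemma rank_down v i : rank (Defs.down v i) = rank v - 1.
Proof. by rewrite downE rankB rank_ev. Qed.

Lemma down_shift u y i : Defs.down (u + y) i = Defs.down u i + y.
Proof. by rewrite !downE addrAC. Qed.

(* The number of pairs of [k]-step descending paths from [u] and from [v] with a common end. *)
Fixpoint meet_count (k : nat) u v : nat :=
  if k is k'.+1 then \sum_i \sum_j meet_count k' (Defs.down u i) (Defs.down v j)
  else u == v.

Lemma meet_countC k u v : meet_count k u v = meet_count k v u.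
Proof.
elim: k u v => [|k IH] u v /=; first by rewrite eq_sym.
by rewrite exchange_big; apply: eq_bigr => i _; apply: eq_bigr => j _.
Qed.

Lemma meet_count_le k u v : (meet_count k u v <= (d.+1 ^ 2) ^ k)%N.
Proof.
elim: k u v => [|k IH] u v /=; first exact: leq_b1.
apply: (@leq_trans (\sum_(i < d.+1) \sum_(j < d.+1) (d.+1 ^ 2) ^ k)%N).
  by apply: leq_sum => i _; apply: leq_sum => j _.
by rewrite !sum_nat_const !card_ord [((_ ^ 2) ^ k.+1)%N]expnSr mulnA mulnn mulnC.
Qed.

Lemma meet_count_shift k u v y : meet_count k (u + y) (v + y) = meet_count k u v.
Proof.
elim: k u v => [|k IH] u v /=; first by rewrite (inj_eq (addIr y)).
by apply: eq_bigr => i _; apply: eq_bigr => j _; rewrite !down_shift IH.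
Qed.

Lemma meet_count_diag k u v : meet_count k u u = meet_count k v v.
Proof. by rewrite -(meet_count_shift k u u (v - u)) addrC subrK. Qed.

Definition transfer u i j : pt d := Defs.down u j + ev i.

Lemma meet_count_down k u i j :
  meet_count k (Defs.down u i) (Defs.down u j) = meet_count k u (transfer u i j).
Proof. by rewrite -(meet_count_shift k _ _ (ev i)) downE subrK. Qed.

Lemma transferE u i j l : transfer u i j l = u l - (l == j)%:Z + (l == i)%:Z.
Proof. by rewrite !ffunE. Qed.

Lemma rank_transfer u i j : rank (transfer u i j) = rank u.
Proof. by rewrite rankD rank_down rank_ev subrK. Qed.

Lemma sum_meet_count_transfer k u :
  (\sum_i \sum_j meet_count k u (transfer u i j))%N = meet_count k.+1 u u.
Proof. by apply: eq_bigr => i _; apply: eq_bigr => j _; rewrite -meet_count_down. Qed.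

Definition l1dist u v : int := \sum_l `|v l - u l|.

Lemma exists_coord_lt u v : rank u = rank v -> u != v -> exists i, u i < v i.
Proof.
move=> ruv neq; apply/existsP; apply: contraNT neq => /existsPn vu.
have ge0 l : 0 <= u l - v l by rewrite subr_ge0 leNgt vu.
have sum0 : \sum_l (u l - v l) = 0 by rewrite sumrB -/(rank u) -/(rank v) ruv subrr.
apply/eqP/ffunP => l; apply/eqP; rewrite -subr_eq0.
exact/eqP/(psumr_eq0P (fun l _ => ge0 l) sum0).
Qed.

Lemma l1dist_transfer u v i j : u i < v i -> v j < u j ->
  l1dist (transfer u i j) v + 2 = l1dist u v.
Proof.
move=> lt_i lt_j; have ji : j != i by apply: contraTneq lt_j => ->; rewrite -leNgt ltW.
have coord l : `|v l - transfer u i j l| = `|v l - u l| - (l == i)%:Z - (l == j)%:Z.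
  rewrite transferE; have [->|li] := eqVneq l i.
    by rewrite eq_sym (negbTE ji) !ger0_norm; lia.
  have [->|lj] := eqVneq l j; first by rewrite !ler0_norm; lia.
  by rewrite !subr0 ?addr0.
have sum_ind (k : 'I_d.+1) : \sum_l (l == k)%:Z = 1.
  by rewrite -(rank_ev k); apply: eq_bigr => l _; rewrite ffunE.
have -> : l1dist (transfer u i j) v = \sum_l (`|v l - u l| - (l == i)%:Z - (l == j)%:Z).
  by apply: eq_bigr => l _; exact: coord.
by rewrite !sumrB !sum_ind -/(l1dist u v); lia.
Qed.

Lemma l1dist_ge0 u v : 0 <= l1dist u v.
Proof. exact: sumr_ge0. Qed.

Lemma exists_transfer u v : rank u = rank v -> u != v ->
  exists i j, l1dist (transfer u i j) v + 2 = l1dist u v.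
Proof.
move=> ruv neq; have [i lt_i] := exists_coord_lt ruv neq.
have [j lt_j] : exists j, v j < u j by apply: exists_coord_lt; rewrite // eq_sym.
by exists i, j; apply: l1dist_transfer.
Qed.

Definition axis_pt t : pt d := [ffun i => if i == ord0 then t%:Z else 0].

Lemma rank_axis_pt t : rank (axis_pt t) = t%:Z.
Proof.
rewrite /rank (bigD1 ord0) //= ffunE eqxx big1 ?addr0 // => i /negbTE i0.
by rewrite ffunE i0.
Qed.

End Lattice.

Section Windows.
Variables (d N : nat).
Implicit Types (x u : pt d) (o : {ffun 'I_d.+1 -> 'I_N}).

Definition window_pt x o : pt d := [ffun i => x i + (o i : nat)%:Z].

Lemma window_pt_inj x : injective (window_pt x).
Proof.
move=> o o' /ffunP eq_oo'; apply/ffunP => i; apply: val_inj.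
by have := eq_oo' i; rewrite !ffunE => /addrI [].
Qed.

Lemma inWindowP x u : inWindow N x u -> exists o, u = window_pt x o.
Proof.
case=> _ u_in.
have lt_N i : (`|u i - x i|%N < N)%N.
  by have /andP[x_le u_lt] := u_in i; rewrite -ltz_nat gez0_abs ?subr_ge0 // ltrBlDl.
exists [ffun i => Ordinal (lt_N i)]; apply/ffunP => i; rewrite !ffunE /=.
by have /andP[x_le _] := u_in i; rewrite gez0_abs ?subr_ge0 //; lia.
Qed.

Lemma l1dist_window_pt x o o' :
  l1dist (window_pt x o) (window_pt x o') <= 2 * (d.+1 * N)%N%:Z.
Proof.
apply: (@le_trans _ _ (\sum_(l < d.+1) N%:Z)).
  apply: ler_sum => l _; rewrite !ffunE ler_norml.
  by have := ltn_ord (o l); have := ltn_ord (o' l); lia.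
by rewrite sumr_const card_ord; lia.
Qed.

End Windows.


(** * The meeting kernel and the noise of a linear combination *)

Section MeetKernel.
Variables (R : realDomainType) (d : nat).
Local Notation G k u v := ((meet_count k u v)%:R : R).

Lemma meet_count_psd k (I : finType) (p : I -> pt d) (c : I -> R) :
  0 <= \sum_a \sum_b c a * c b * G k (p a) (p b).
Proof.
elim: k I p c => [|k IH] I p c /=.
  set s := undup [seq p a | a <- enum I].
  have ps a : p a \in s by rewrite mem_undup; apply: map_f; rewrite mem_enum.
  have eq_sum a b : (p a == p b)%:R = \sum_(w <- s) (p a == w)%:R * (p b == w)%:R :> R.
    rewrite (bigD1_seq (p a)) ?undup_uniq //= eqxx mul1r eq_sym big1 ?addr0 //.
    by move=> w /negbTE pw; rewrite eq_sym pw mul0r.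
  suff -> : \sum_a \sum_b c a * c b * (p a == p b)%:R =
      \sum_(w <- s) (\sum_a c a * (p a == w)%:R) ^+ 2.
    by apply: sumr_ge0 => w _; apply: sqr_ge0.
  symmetry; under eq_bigr do rewrite expr2 mulr_suml.
  rewrite exchange_big; apply: eq_bigr => a _; under eq_bigr do rewrite mulr_sumr.
  rewrite exchange_big; apply: eq_bigr => b _.
  by rewrite eq_sum mulr_sumr; apply: eq_bigr => w _; ring.
(* The form of level [k.+1] on [p] is the form of level [k] on the family of all
   [Defs.down (p a) i]. *)
have := IH _ (fun x : I * 'I_d.+1 => Defs.down (p x.1) x.2) (fun x => c x.1).
congr (_ <= _).
rewrite -(pair_bigA _ (fun a i => \sum_(y : I * 'I_d.+1)
  c a * c y.1 * G k (Defs.down (p a) i) (Defs.down (p y.1) y.2))) /=.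
apply: eq_bigr => a _; rewrite exchange_big /=; symmetry.
have inner b : c a * c b * G k.+1 (p a) (p b) = \sum_(j < d.+1) \sum_(i < d.+1)
    c a * c b * G k (Defs.down (p a) i) (Defs.down (p b) j).
  rewrite /= natr_sum mulr_sumr exchange_big /=.
  by apply: eq_bigr => j _; rewrite natr_sum mulr_sumr.
by under eq_bigr do rewrite inner; rewrite pair_bigA.
Qed.

Lemma meet_count_le_diag k (u v : pt d) : G k u v <= G k u u.
Proof.
have := meet_count_psd k (fun b : bool => if b then u else v)
  (fun b : bool => if b then 1 else -1 : R).
by rewrite !big_bool /= (meet_count_diag k v u) (meet_countC k v u); lra.
Qed.

Lemma meet_count_tri k (u v w : pt d) :
  G k u u - G k u w <= 2 * (G k u u - G k u v) + 2 * (G k u u - G k v w).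
Proof.
pose p (b : 'I_3) := if val b == 0%N then u else if val b == 1%N then v else w.
pose c (b : 'I_3) : R := if val b == 0%N then 1 else if val b == 1%N then -2 else 1.
have := meet_count_psd k p c; rewrite !big_ord_recl !big_ord0 /p /c /=.
rewrite (meet_count_diag k v u) (meet_count_diag k w u).
by rewrite (meet_countC k v u) (meet_countC k w u) (meet_countC k w v); lra.
Qed.

Definition meet_form (J : finType) (g : J -> R) (q : J -> pt d) k : R :=
  \sum_o \sum_o' g o * g o' * G k (q o) (q o').

Lemma meet_form_ge0 (J : finType) (g : J -> R) q k : 0 <= meet_form g q k.
Proof. exact: meet_count_psd. Qed.

Lemma meet_form0 (J : finType) (g : J -> R) q : injective q ->
  meet_form g q 0 = \sum_o g o ^+ 2.
Proof.
move=> q_inj; apply: eq_bigr => o _ /=.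
rewrite (bigD1 o) //= eqxx mulr1 big1 ?addr0 // => o' /negbTE o'o.
by rewrite (inj_eq q_inj) eq_sym o'o mulr0.
Qed.

End MeetKernel.

Lemma sqr_sum_le_card (R : realFieldType) (J : finType) (g : J -> R) :
  (\sum_o g o) ^+ 2 <= #|J|%:R * \sum_o g o ^+ 2.
Proof.
have : 0 <= \sum_o \sum_o' (g o - g o') ^+ 2 by do 2![apply: sumr_ge0 => ? _]; apply: sqr_ge0.
suff -> : \sum_o \sum_o' (g o - g o') ^+ 2 =
    2 * (#|J|%:R * \sum_o g o ^+ 2) - 2 * (\sum_o g o) ^+ 2 by lra.
transitivity (\sum_o (g o ^+ 2 *+ #|J| + \sum_o' g o' ^+ 2 - 2 * (g o * \sum_o' g o'))).
  apply: eq_bigr => o _; rewrite !mulr_sumr -sumr_const -!big_split -sumrB.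
  by apply: eq_bigr => o' _ /=; ring.
rewrite sumrB big_split /= sumrMnl sumr_const -mulr_sumr -mulr_suml.
by rewrite -[_ *+ #|J|]mulr_natr; ring.
Qed.

Section Noise.
Variables (R : realFieldType) (d : nat) (A : R).
Hypothesis A_ge0 : 0 <= A.
Implicit Types (u v w : pt d) (i j : 'I_d.+1).
Local Notation G k u v := ((meet_count k u v)%:R : R).

Definition meet_defect K u v : R := \sum_(k < K) A ^+ k.+1 * (G k u u - G k u v).

Definition noise_form (J : finType) (g : J -> R) (q : J -> pt d) t : R :=
  \sum_(k < t) A ^+ k.+1 * meet_form g q k.

Definition diag_noise t u : R := \sum_(k < t) A ^+ k.+1 * G k u u.

Lemma noise_form_ge0 (J : finType) (g : J -> R) q t : 0 <= noise_form g q t.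
Proof. by apply: sumr_ge0 => k _; rewrite mulr_ge0 ?exprn_ge0 ?meet_form_ge0. Qed.

Lemma diag_noise_ge0 t u : 0 <= diag_noise t u.
Proof. by apply: sumr_ge0 => k _; rewrite mulr_ge0 ?exprn_ge0. Qed.

Lemma noise_form_ge_sqsum (J : finType) (g : J -> R) q t : (0 < t)%N -> injective q ->
  A * \sum_o g o ^+ 2 <= noise_form g q t.
Proof.
case: t => // t _ q_inj; rewrite -(meet_form0 g q_inj) /noise_form big_ord_recl /= expr1 lerDl.
by apply: sumr_ge0 => k _; rewrite mulr_ge0 ?exprn_ge0 ?meet_form_ge0.
Qed.

Lemma meet_defect_ge0 K u v : 0 <= meet_defect K u v.
Proof.
apply: sumr_ge0 => k _; rewrite mulr_ge0 ?exprn_ge0 //.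
by rewrite subr_ge0 meet_count_le_diag.
Qed.

Lemma meet_defectxx K u : meet_defect K u u = 0.
Proof. by rewrite /meet_defect big1 // => k _; rewrite subrr mulr0. Qed.

Lemma meet_defect_tri K u v w :
  meet_defect K u w <= 2 * meet_defect K u v + 2 * meet_defect K v w.
Proof.
rewrite /meet_defect !mulr_sumr -big_split; apply: ler_sum => k _ /=.
have := meet_count_tri R k u v w; rewrite (meet_count_diag k v u).
have := exprn_ge0 k.+1 A_ge0; nra.
Qed.

Lemma noise_defect_expansion (J : finType) (g : J -> R) q t v :
  (\sum_o g o) ^+ 2 * diag_noise t v - noise_form g q t =
  \sum_o \sum_o' g o * g o' * meet_defect t (q o) (q o').
Proof.
rewrite /diag_noise /noise_form /meet_defect mulr_sumr -sumrB.
under [RHS]eq_bigr do under eq_bigr do rewrite mulr_sumr.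
under [RHS]eq_bigr do rewrite exchange_big /=; rewrite exchange_big /=.
apply: eq_bigr => k _; rewrite /meet_form [_ ^+ 2]expr2 !mulr_suml mulr_sumr -sumrB.
apply: eq_bigr => o _; rewrite mulr_sumr mulr_suml mulr_sumr -sumrB.
by apply: eq_bigr => o' _; rewrite (meet_count_diag k v (q o)); ring.
Qed.

Hypothesis A_crit : A * d.+1%:R ^+ 2 = 1.

(* With A (d+1)^2 = 1 the sequence A^k G_k(u,u) is nonincreasing, and summing the defects
   of all transfers from [u] telescopes. *)
Lemma meet_defect_transfer K u i j : meet_defect K u (transfer u i j) <= 1.
Proof.
pose f k := A ^+ k * G k u u.
have drop k : A ^+ k.+1 * \sum_i' \sum_j' (G k u u - G k u (transfer u i' j')) = f k - f k.+1.
  have -> : \sum_i' \sum_j' (G k u u - G k u (transfer u i' j')) =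
      G k u u *+ d.+1 *+ d.+1 - G k.+1 u u.
    rewrite (eq_bigr (fun i' => G k u u *+ d.+1 - \sum_j' G k u (transfer u i' j'))).
      rewrite sumrB sumr_const card_ord -sum_meet_count_transfer natr_sum.
      by congr (_ - _); apply: eq_bigr => i' _; rewrite natr_sum.
    by move=> i' _; rewrite sumrB sumr_const card_ord.
  have -> : f k = f k * (A * d.+1%:R ^+ 2) by rewrite A_crit mulr1.
  rewrite /f -[_ *+ d.+1 *+ d.+1]mulr_natr -[_ *+ d.+1]mulr_natr.
  by move: (G k u u) (G k.+1 u u) => g g'; rewrite exprS; ring.
have telescope : \sum_(k < K) (f k - f k.+1) = f 0%N - f K.
  rewrite -(big_mkord xpredT (fun k => f k - f k.+1)) -opprB -telescope_sumr //.
  by rewrite -sumrN; apply: eq_bigr => k _; rewrite opprB.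
apply: (@le_trans _ _ (f 0%N - f K)).
  rewrite -telescope; apply: ler_sum => k _; rewrite -drop ler_wpM2l ?exprn_ge0 //.
  have term_ge0 i' j' : 0 <= G k u u - G k u (transfer u i' j').
    by rewrite subr_ge0 meet_count_le_diag.
  rewrite (bigD1 i) //= (bigD1 j) //= -addrA lerDl.
  by rewrite addr_ge0 ?sumr_ge0 // => i' _; rewrite sumr_ge0.
by rewrite /f /= eqxx mul1r lerBlDr lerDl mulr_ge0 ?exprn_ge0.
Qed.

Lemma meet_defect_le_l1dist K n u v : rank u = rank v -> l1dist u v <= 2 * n%:Z ->
  meet_defect K u v <= 4 ^+ n.
Proof.
elim: n u v => [|n IH] u v ruv uv; have [<-|neq] := eqVneq u v;
  rewrite ?meet_defectxx ?exprn_ge0 //; have [i [j l1_step]] := exists_transfer ruv neq.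
  by exfalso; have := l1dist_ge0 (transfer u i j) v; lia.
have rest : meet_defect K (transfer u i j) v <= 4 ^+ n.
  by apply: IH; [rewrite rank_transfer | lia].
have := meet_defect_tri K u (transfer u i j) v; have := meet_defect_transfer K u i j.
have : 1 <= 4 ^+ n :> R by apply: exprn_ege1; lra.
by rewrite exprS; lra.
Qed.

Lemma diag_noise_le_crit (J : finType) (g : J -> R) q t v m :
  injective q -> (forall o o', l1dist (q o) (q o') <= 2 * m%:Z) ->
  (forall o, g o != 0 -> rank (q o) = t%:Z) -> (0 < t)%N ->
  A * ((\sum_o g o) ^+ 2 * diag_noise t v) <=
    (A + 2 * 4 ^+ m * #|J|%:R) * noise_form g q t.
Proof.
move=> q_inj ql1 hq t_gt0; set Y := \sum_o g o ^+ 2.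
have term_le o o' : g o * g o' * meet_defect t (q o) (q o') <= (g o ^+ 2 + g o' ^+ 2) * 4 ^+ m.
  have e_ge0 := meet_defect_ge0 t (q o) (q o').
  have [->|go] := eqVneq (g o) 0; first by rewrite !mul0r mulr_ge0 ?addr_ge0 ?sqr_ge0 ?exprn_ge0.
  have [->|go'] := eqVneq (g o') 0.
    by rewrite mulr0 mul0r mulr_ge0 ?addr_ge0 ?sqr_ge0 ?exprn_ge0.
  have e_le := meet_defect_le_l1dist t (etrans (hq o go) (esym (hq o' go'))) (ql1 o o').
  have xy_le : g o * g o' <= g o ^+ 2 + g o' ^+ 2.
    by have := sqr_ge0 (g o - g o'); have := sqr_ge0 (g o + g o'); nra.
  apply: le_trans (ler_wpM2r e_ge0 xy_le) _.
  by rewrite ler_wpM2l ?addr_ge0 ?sqr_ge0.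
have sum_sq : \sum_o \sum_o' (g o ^+ 2 + g o' ^+ 2) * 4 ^+ m = 2 * 4 ^+ m * #|J|%:R * Y.
  under eq_bigr do rewrite -mulr_suml big_split /= sumr_const.
  by rewrite -mulr_suml big_split /= sumrMnl sumr_const -/Y -!(mulr_natr Y); ring.
have Y_le : A * Y <= noise_form g q t := noise_form_ge_sqsum g t_gt0 q_inj.
have defect_le : (\sum_o g o) ^+ 2 * diag_noise t v - noise_form g q t <= 2 * 4 ^+ m * #|J|%:R * Y.
  rewrite noise_defect_expansion -sum_sq.
  by apply: ler_sum => o _; apply: ler_sum => o' _; apply: term_le.
have c_ge0 : 0 <= 2 * 4 ^+ m * #|J|%:R :> R by rewrite !mulr_ge0 ?exprn_ge0.
have := ler_wpM2l A_ge0 defect_le; have := ler_wpM2l c_ge0 Y_le.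
move: (2 * 4 ^+ m * _) (noise_form _ _ _) ((\sum_o g o) ^+ 2 * _) => c P SM.
by rewrite mulrBr; lra.
Qed.

End Noise.

Section Comparison.
Variables (R : realFieldType) (d : nat) (A : R).
Hypothesis A_gt0 : 0 < A.
Let A_ge0 : 0 <= A := ltW A_gt0.
Local Notation B := (A * d.+1%:R ^+ 2).
Local Notation D := (d.+1%:R : R).

Lemma diag_noise_le_geom t (v : pt d) : diag_noise A t v <= A * \sum_(k < t) B ^+ k.
Proof.
rewrite mulr_sumr; apply: ler_sum => k _; rewrite exprMn exprS -mulrA.
rewrite ler_wpM2l ?A_ge0 // ler_wpM2l ?exprn_ge0 ?A_ge0 //.
by rewrite -!natrX ler_nat meet_count_le.
Qed.

Lemma noise_compare_noncrit (J : finType) (g : J -> R) (q : J -> pt d) t (v : pt d) :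
  B != 1 -> (0 < t)%N -> injective q ->
  (\sum_o g o) ^+ 2 * (B ^+ t + D * diag_noise A t v) <=
    (1 + (D * A + #|J|%:R) / `|B - 1|) * (B ^+ t * (\sum_o g o) ^+ 2 + D * noise_form A g q t).
Proof.
move=> B1 t_gt0 q_inj; set e := `|B - 1|; have e_gt0 : 0 < e by rewrite normr_gt0 subr_eq0.
set S2 := (\sum_o g o) ^+ 2; set M := diag_noise A t v; set P := noise_form A g q t.
have geom : e * \sum_(k < t) B ^+ k <= B ^+ t + 1.
  rewrite -[X in e * X]ger0_norm ?sumr_ge0 // => [|k _]; last by rewrite exprn_ge0 ?mulr_ge0 ?A_ge0.
  rewrite -normrM -subrX1 (le_trans (ler_normB _ _)) // normr1 ger0_norm //.
  by rewrite exprn_ge0 ?mulr_ge0 ?A_ge0.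
have eM : e * M <= A * (B ^+ t + 1).
  apply: le_trans (ler_wpM2l (ltW e_gt0) (diag_noise_le_geom t v)) _.
  by rewrite mulrCA ler_wpM2l ?A_ge0.
have AS2 : A * S2 <= #|J|%:R * P.
  apply: le_trans (ler_wpM2l A_ge0 (sqr_sum_le_card g)) _.
  by rewrite mulrCA ler_wpM2l ?ler0n ?noise_form_ge_sqsum ?A_ge0.
have S2_ge0 : 0 <= S2 := sqr_ge0 _.
have P_ge0 : 0 <= P := noise_form_ge0 A_ge0 g q t.
have Bt_ge0 : 0 <= B ^+ t by rewrite exprn_ge0 ?mulr_ge0 ?A_ge0.
have D_ge0 : 0 <= D := ler0n _ _.
have -> : (1 + (D * A + #|J|%:R) / e) * (B ^+ t * S2 + D * P) =
    (e + D * A + #|J|%:R) * (B ^+ t * S2 + D * P) / e by field; rewrite lt0r_neq0.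
rewrite ler_pdivlMr //.
have := ler_wpM2l (mulr_ge0 D_ge0 S2_ge0) eM; have := ler_wpM2l D_ge0 AS2.
have := mulr_ge0 (mulr_ge0 (ltW e_gt0) D_ge0) P_ge0.
have := mulr_ge0 (mulr_ge0 (mulr_ge0 D_ge0 A_ge0) D_ge0) P_ge0.
have := mulr_ge0 (mulr_ge0 (ler0n _ #|J|) Bt_ge0) S2_ge0.
nra.
Qed.

Lemma noise_compare (J : finType) m : exists C : R,
  forall (g : J -> R) (q : J -> pt d) t (v : pt d),
  injective q -> (forall o o', l1dist (q o) (q o') <= 2 * m%:Z) ->
  (forall o, g o != 0 -> rank (q o) = t%:Z) -> (0 < t)%N ->
  (\sum_o g o) ^+ 2 * (B ^+ t + D * diag_noise A t v) <=
    C * (B ^+ t * (\sum_o g o) ^+ 2 + D * noise_form A g q t).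
Proof.
have [B1|B1] := eqVneq B 1; last first.
  exists (1 + (D * A + #|J|%:R) / `|B - 1|) => g q t v q_inj _ _ t_gt0.
  exact: noise_compare_noncrit.
exists ((A + 2 * 4 ^+ m * #|J|%:R) / A) => g q t v q_inj ql1 hq t_gt0.
have := diag_noise_le_crit A_ge0 B1 v q_inj ql1 hq t_gt0.
move=> crit; rewrite B1 expr1n mul1r [X in _ <= X]mulrAC ler_pdivlMr //; move: crit.
have := noise_form_ge0 A_ge0 g q t; have := sqr_ge0 (\sum_o g o).
have := diag_noise_ge0 A_ge0 t v; have : 0 <= D := ler0n _ _.
have : 0 <= 2 * 4 ^+ m * #|J|%:R :> R by rewrite !mulr_ge0 ?exprn_ge0.
move: (2 * 4 ^+ m * _) (noise_form _ _ _ _) ((\sum_o g o) ^+ 2) (diag_noise _ _ _) => c P S2 M.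
nra.
Qed.

End Comparison.

Lemma fsumr_seq (R : nmodType) (T : choiceType) (r : seq T) (F : T -> R) :
  uniq r -> (forall x, x \notin r -> F x = 0) -> \sum_(x \in [set: T]) F x = \sum_(x <- r) F x.
Proof.
move=> ur F0; rewrite [RHS]fsbig_seq // (fsbig_widen [set` r] [set: T] F) //.
by move=> x [_ /= xr]; apply: F0; apply/negP.
Qed.

(** * Gaussian computations *)

Section Covariance.
Variables (R : realType) (d : nat).
Implicit Types (f g h : src d -> R) (r : seq (src d)).

(* [cov] is a finitely supported sum (junk 0 otherwise), so it is computed on an explicit
   list containing the support. *)
Lemma cov_seqE r f g : (forall s, s \notin r -> f s = 0) ->
  cov f g = \sum_(s <- undup r) f s * g s.
Proof.
move=> f0; rewrite /cov (fsumr_seq (undup_uniq r)) // => s.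
by rewrite mem_undup => /f0 ->; rewrite mul0r.
Qed.

Lemma covC f g : cov f g = cov g f.
Proof. by apply: eq_fsbigr => s _; rewrite mulrC. Qed.

Lemma cov_X0 f : cov (@X0 R d) f = f None.
Proof. by rewrite (@cov_seqE [:: None]) /= ?big_seq1 ?mul1r // => -[]. Qed.

Lemma cov_Wn v i f : cov (Wn v i) f = f (Some (v, i)).
Proof.
rewrite (@cov_seqE [:: Some (v, i)]) /= ?big_seq1 /Wn ?eqxx ?mul1r //.
by move=> s; rewrite inE => /negbTE ->.
Qed.

Lemma cov_suml r (J : finType) (c : J -> R) (f : J -> src d -> R) h :
  (forall j s, s \notin r -> f j s = 0) ->
  cov (fun s => \sum_j c j * f j s) h = \sum_j c j * cov (f j) h.
Proof.
move=> fr; rewrite (@cov_seqE r); last by move=> s sr; rewrite big1 // => j _; rewrite fr ?mulr0.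
under eq_bigr do rewrite mulr_suml.
rewrite exchange_big; apply: eq_bigr => j _.
by rewrite (cov_seqE _ (fr j)) mulr_sumr; apply: eq_bigr => s _; rewrite mulrA.
Qed.

Lemma covDl r f1 f2 h :
  (forall s, s \notin r -> f1 s = 0) -> (forall s, s \notin r -> f2 s = 0) ->
  cov (f1 \+ f2) h = cov f1 h + cov f2 h.
Proof.
move=> f1r f2r; have f12r s : s \notin r -> (f1 \+ f2) s = 0.
  by move=> sr; rewrite /= f1r ?f2r ?addr0.
rewrite (cov_seqE _ f1r) (cov_seqE _ f2r) (cov_seqE _ f12r).
by rewrite -big_split; apply: eq_bigr => s _; rewrite mulrDl.
Qed.

End Covariance.

Local Open Scope classical_set_scope.

Section Broadcast.
Variables (R : realType) (d : nat) (alpha : nat -> R).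
Implicit Types (u v w : pt d) (i j : 'I_d.+1) (h : src d -> R).
Local Notation a := (alpha d.+1).
Local Notation A := (a ^+ 2).
Local Notation D := (d.+1%:R : R).
Local Notation B := (A * D ^+ 2).
Local Notation G k u v := ((meet_count k u v)%:R : R).
Local Notation X0 := (@X0 R d).

Lemma Xn_None n v : Xn alpha n v None = (a * D) ^+ n.
Proof.
elim: n v => [|n IH] v /=; first by rewrite expr0.
under eq_bigr do rewrite IH /Wn /= addr0.
by rewrite sumr_const card_ord -mulr_natr exprS; ring.
Qed.

Lemma Xn_noise_above n w v i : rank w < rank v -> Xn alpha n w (Some (v, i)) = 0.
Proof.
elim: n w => [|n IH] w //= wv; rewrite big1 ?mulr0 // => j _.
rewrite IH ?rank_down; last by rewrite ltrBlDr (lt_le_trans wv) ?lerDl.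
by rewrite /Wn; case: eqP => [[vw _]|]; [move: wv; rewrite vw ltxx | rewrite addr0].
Qed.

Fixpoint Xn_support n v : seq (src d) :=
  if n is n'.+1 then flatten [seq Some (v, i) :: Xn_support n' (Defs.down v i) | i <- enum 'I_d.+1]
  else [:: None].

Lemma mem_Xn_support_down n v i s :
  s \in Xn_support n (Defs.down v i) -> s \in Xn_support n.+1 v.
Proof. by move=> s_i; apply/flatten_mapP; exists i; rewrite ?mem_enum // inE s_i orbT. Qed.

Lemma mem_Xn_support_Wn n v i : Some (v, i) \in Xn_support n.+1 v.
Proof. by apply/flatten_mapP; exists i; rewrite ?mem_enum // inE eqxx. Qed.

Lemma Xn_supp n v s : s \notin Xn_support n v -> Xn alpha n v s = 0.
Proof.
elim: n v => [|n IH] v /=; first by case: s => // -[]; rewrite inE.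
move=> sv; rewrite big1 ?mulr0 // => i _.
rewrite IH; last by apply: contra sv; apply: mem_Xn_support_down.
rewrite /Wn; case: eqP => [si|_]; last by rewrite addr0.
by rewrite si mem_Xn_support_Wn in sv.
Qed.

Lemma cov_XnS n u h :
  cov (Xn alpha n.+1 u) h = a * \sum_i (cov (Xn alpha n (Defs.down u i)) h + cov (Wn u i) h).
Proof.
have supp_down i s : s \notin Xn_support n.+1 u -> Xn alpha n (Defs.down u i) s = 0.
  by move=> su; apply: Xn_supp; apply: contra su; apply: mem_Xn_support_down.
have supp_Wn i s : s \notin Xn_support n.+1 u -> Wn u i s = 0 :> R.
  by rewrite /Wn; case: eqP => // -> /negP[]; apply: mem_Xn_support_Wn.
have -> : Xn alpha n.+1 u = fun s => \sum_i a * (Xn alpha n (Defs.down u i) \+ Wn u i) s.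
  by apply/funext => s; rewrite /= mulr_sumr.
rewrite (@cov_suml _ _ (Xn_support n.+1 u)); last first.
  by move=> i s su; rewrite /= supp_down ?supp_Wn ?addr0.
by rewrite mulr_sumr; apply: eq_bigr => i _; rewrite (covDl h (supp_down i) (supp_Wn i)).
Qed.

Lemma sum_Wn u v i : \sum_j Wn v j (Some (u, i)) = (u == v)%:R :> R.
Proof.
rewrite /Wn; have [<-|neq] := eqVneq u v.
  rewrite (bigD1 i) //= eqxx big1 ?addr0 // => j /negbTE ji.
  by case: eqP => // -[] /eqP; rewrite eq_sym ji.
by rewrite big1 // => j _; case: eqP => // -[] /eqP; rewrite (negbTE neq).
Qed.

Lemma cov_Wn_Xn n u v i : rank u = rank v ->
  cov (Wn u i) (Xn alpha n.+1 v) = a * (u == v)%:R.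
Proof.
move=> ruv; rewrite cov_Wn /= -(sum_Wn u v i); congr (_ * _); apply: eq_bigr => j _.
by rewrite Xn_noise_above ?add0r // rank_down -ruv ltrBlDr ltrDl.
Qed.

Lemma cov_XnSS n u v : rank u = rank v ->
  cov (Xn alpha n.+1 u) (Xn alpha n.+1 v) =
  A * (\sum_i \sum_j cov (Xn alpha n (Defs.down u i)) (Xn alpha n (Defs.down v j)) +
       D * (u == v)%:R).
Proof.
move=> ruv; rewrite cov_XnS; under eq_bigr do rewrite cov_Wn_Xn // covC cov_XnS.
have flip i j : cov (Xn alpha n (Defs.down v j)) (Xn alpha n (Defs.down u i)) +
    cov (Wn v j) (Xn alpha n (Defs.down u i)) =
    cov (Xn alpha n (Defs.down u i)) (Xn alpha n (Defs.down v j)).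
  by rewrite cov_Wn Xn_noise_above ?addr0 1?covC // rank_down ruv ltrBlDr ltrDl.
under eq_bigr do under eq_bigr do rewrite flip.
by rewrite big_split /= sumr_const card_ord -mulr_sumr -mulr_natl; ring.
Qed.

Lemma cov_Xn n u v : rank u = rank v ->
  cov (Xn alpha n u) (Xn alpha n v) = B ^+ n + D * \sum_(k < n) A ^+ k.+1 * G k u v.
Proof.
elim: n u v => [|n IH] u v ruv; first by rewrite big_ord0 mulr0 addr0 cov_X0.
rewrite cov_XnSS //.
under eq_bigr do under eq_bigr do rewrite IH ?rank_down ?ruv //.
rewrite [in RHS]big_ord_recl /=.
under [in RHS]eq_bigr => k _ do rewrite /bump /= add1n exprS -mulrA.
set F := fun k i j => A ^+ k.+1 * G k (Defs.down u i) (Defs.down v j).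
have meet_rec : \sum_i \sum_j \sum_(k < n) F k i j = \sum_(k < n) A ^+ k.+1 * G k.+1 u v.
  under eq_bigr do rewrite exchange_big /=; rewrite exchange_big /=.
  apply: eq_bigr => k _; rewrite natr_sum mulr_sumr; apply: eq_bigr => i _.
  by rewrite natr_sum mulr_sumr.
have split_sum : \sum_i \sum_j (B ^+ n + D * \sum_(k < n) F k i j) =
    B ^+ n *+ d.+1 *+ d.+1 + D * \sum_i \sum_j \sum_(k < n) F k i j.
  under eq_bigr do rewrite big_split /= sumr_const card_ord -mulr_sumr.
  by rewrite big_split /= sumr_const card_ord -mulr_sumr.
rewrite split_sum meet_rec -mulr_sumr; move: (\sum_(k < n) _) (G 0 u v) => x g.
by rewrite -[_ *+ d.+1 *+ d.+1]mulr_natr -[B ^+ n *+ _]mulr_natr [B ^+ n.+1]exprS /=; ring.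
Qed.

Definition lincomb (J : finType) (g : J -> R) (q : J -> pt d) t : src d -> R :=
  fun s => \sum_o g o * Xn alpha t (q o) s.

Lemma cov_lincomb_l (J : finType) (g : J -> R) q t h :
  cov (lincomb g q t) h = \sum_o g o * cov (Xn alpha t (q o)) h.
Proof.
apply: (@cov_suml _ _ (flatten [seq Xn_support t (q o) | o <- enum J])) => o s so.
by apply: Xn_supp; apply: contra so => s_o; apply/flatten_mapP; exists o; rewrite ?mem_enum.
Qed.

Lemma cov_lincomb_X0 (J : finType) (g : J -> R) q t :
  cov (lincomb g q t) X0 = (a * D) ^+ t * \sum_o g o.
Proof.
rewrite cov_lincomb_l mulr_sumr; apply: eq_bigr => o _.
by rewrite covC cov_X0 Xn_None mulrC.
Qed.

Lemma var_lincomb (J : finType) (g : J -> R) q t :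
  (forall o, g o != 0 -> rank (q o) = t%:Z) ->
  var (lincomb g q t) = B ^+ t * (\sum_o g o) ^+ 2 + D * noise_form A g q t.
Proof.
move=> hq; pose K o o' := \sum_(k < t) A ^+ k.+1 * G k (q o) (q o').
have pair_cov o o' : g o * g o' * cov (Xn alpha t (q o)) (Xn alpha t (q o')) =
    g o * g o' * (B ^+ t + D * K o o').
  have [->|go] := eqVneq (g o) 0; first by rewrite !mul0r.
  have [->|go'] := eqVneq (g o') 0; first by rewrite mulr0 !mul0r.
  by rewrite cov_Xn // !hq.
have noise_exchange : noise_form A g q t = \sum_o \sum_o' g o * g o' * K o o'.
  rewrite /noise_form /meet_form; under eq_bigr do rewrite mulr_sumr.
  rewrite exchange_big; apply: eq_bigr => o _; under eq_bigr do rewrite mulr_sumr.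
  rewrite exchange_big; apply: eq_bigr => o' _; rewrite mulr_sumr.
  by apply: eq_bigr => k _; rewrite mulrCA.
rewrite /var cov_lincomb_l noise_exchange [(\sum_o g o) ^+ 2]expr2 mulr_suml.
rewrite !mulr_sumr -big_split; apply: eq_bigr => o _.
rewrite covC cov_lincomb_l !mulr_sumr -big_split; apply: eq_bigr => o' _.
by rewrite covC mulrA pair_cov /=; ring.
Qed.

Hypothesis a_gt0 : 0 < alpha d.+1.

Lemma corr_X0_sqr (f : src d -> R) : 0 < var f -> corr f X0 ^+ 2 = cov f X0 ^+ 2 / var f.
Proof.
move=> f_gt0; rewrite /corr /var [cov X0 X0]cov_X0 mulr1 expr_div_n sqr_sqrtr //.
exact: ltW.
Qed.

Lemma var_Xn t (v : pt d) : var (Xn alpha t v) = B ^+ t + D * diag_noise A t v.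
Proof. exact: cov_Xn. Qed.

Lemma var_Xn_gt0 t (v : pt d) : 0 < var (Xn alpha t v).
Proof.
rewrite var_Xn ltr_pwDl ?exprn_gt0 ?mulr_gt0 ?ltr0n //.
by rewrite mulr_ge0 ?diag_noise_ge0 ?sqr_ge0.
Qed.

Lemma corr_Xn_sqr t (v : pt d) :
  corr (Xn alpha t v) X0 ^+ 2 = B ^+ t / (B ^+ t + D * diag_noise A t v).
Proof.
by rewrite corr_X0_sqr ?var_Xn_gt0 // -var_Xn covC cov_X0 Xn_None exprAC [(a * _) ^+ 2]exprMn.
Qed.

Lemma corr_lincomb_sqr (J : finType) (g : J -> R) (q : J -> pt d) t :
  (forall o, g o != 0 -> rank (q o) = t%:Z) -> 0 < var (lincomb g q t) ->
  corr (lincomb g q t) X0 ^+ 2 =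
    B ^+ t * (\sum_o g o) ^+ 2 / (B ^+ t * (\sum_o g o) ^+ 2 + D * noise_form A g q t).
Proof.
move=> hq var_gt0; rewrite corr_X0_sqr // cov_lincomb_X0 var_lincomb //.
by rewrite [(_ * \sum_o g o) ^+ 2]exprMn exprAC [(a * _) ^+ 2]exprMn.
Qed.

Lemma corr_lincomb_le_Xn (J : finType) m : exists C : R,
  forall (g : J -> R) (q : J -> pt d) t (v : pt d),
  injective q -> (forall o o', l1dist (q o) (q o') <= 2 * m%:Z) ->
  (forall o, g o != 0 -> rank (q o) = t%:Z) -> (0 < t)%N -> 0 < var (lincomb g q t) ->
  corr (lincomb g q t) X0 ^+ 2 <= C * corr (Xn alpha t v) X0 ^+ 2.
Proof.
have [C le_C] := noise_compare d (exprn_gt0 2 a_gt0) J m.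
exists C => g q t v q_inj ql1 hq t_gt0 var_gt0.
have W_gt0 := var_Xn_gt0 t v; rewrite var_Xn in W_gt0.
have V_gt0 := var_gt0; rewrite var_lincomb // in V_gt0.
have Bt_ge0 : 0 <= B ^+ t by apply/exprn_ge0/mulr_ge0; apply: sqr_ge0.
rewrite corr_lincomb_sqr // corr_Xn_sqr; move: (le_C g q t v q_inj ql1 hq t_gt0) W_gt0 V_gt0 Bt_ge0.
move: (B ^+ t) ((\sum_o g o) ^+ 2) (noise_form _ _ _ _) (diag_noise _ _ _) => Bt S2 P M.
move=> le_SW W_gt0 V_gt0 Bt_ge0; rewrite ler_pdivrMr // mulrA mulrAC ler_pdivlMr //.
by rewrite -mulrA [C * _]mulrC -mulrA; apply: ler_wpM2l.
Qed.

Definition window_weight (c : pt d -> R) N x t (o : {ffun 'I_d.+1 -> 'I_N}) : R :=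
  if rank (window_pt x o) == t%:Z then c (window_pt x o) else 0.

Lemma window_weight_rank (c : pt d -> R) N x t o :
  @window_weight c N x t o != 0 -> rank (window_pt x o) = t%:Z.
Proof. by rewrite /window_weight; case: ifP => [/eqP //|_]; rewrite eqxx. Qed.

Lemma mem_layer t (u : pt d) : (u \in layer t) = (rank u == t%:Z).
Proof. by apply/idP/eqP => [/set_mem|/mem_set]. Qed.

Lemma zeta_window (c : pt d -> R) N x t :
  (forall u, layer t u -> ~ inWindow N x u -> c u = 0) ->
  zeta alpha c t = lincomb (@window_weight c N x t) (@window_pt d N x) t.
Proof.
move=> c_out; apply/funext => s; rewrite /zeta fsbig_mkcond.
rewrite (@fsumr_seq _ _ [seq window_pt x o | o <- enum {ffun 'I_d.+1 -> 'I_N}]).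
- rewrite big_map big_enum; apply: eq_bigr => o _.
  by rewrite /patch mem_layer /window_weight /Xv; case: eqP => [->|_]; rewrite ?mul0r.
- by rewrite map_inj_uniq ?enum_uniq //; apply: window_pt_inj.
- move=> u u_out; rewrite /patch; case: ifP => // /set_mem u_t.
  rewrite c_out ?mul0r //; move=> /inWindowP [w u_w]; move/negP: u_out; apply.
  by rewrite u_w map_f ?mem_enum.
Qed.

Definition axis_coef (u : pt d) : R := (u == axis_pt d `|rank u|%N)%:R.

Lemma axis_coef_window t u : layer t u -> ~ inWindow 1 (axis_pt d t) u -> axis_coef u = 0.
Proof.
rewrite /axis_coef => u_t; have [u_axis|] := eqVneq; last by [].
case; split; first by rewrite /inHS u_axis rank_axis_pt.
by move=> i; rewrite u_axis u_t lexx ltrDl.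
Qed.

Lemma zeta_axis t : zeta alpha axis_coef t = Xn alpha t (axis_pt d t).
Proof.
apply/funext => s; rewrite /zeta fsbig_mkcond (@fsumr_seq _ _ [:: axis_pt d t]) //.
  by rewrite big_seq1 /patch mem_layer /axis_coef /Xv rank_axis_pt /= !eqxx mul1r.
move=> u; rewrite inE /patch mem_layer /axis_coef => u_axis.
by case: eqP => // ->; rewrite (negbTE u_axis) mul0r.
Qed.

Lemma corr_zeta_sqr_le_axis N (W : nat -> pt d) (c : pt d -> R) :
  (forall t u, layer t u -> ~ inWindow N (W t) u -> c u = 0) ->
  (forall t, 0 < var (zeta alpha c t)) ->
  exists C, forall t, (0 < t)%N ->
    corr (zeta alpha c t) X0 ^+ 2 <= C * corr (zeta alpha axis_coef t) X0 ^+ 2.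
Proof.
move=> c_out var_gt0; have [C le_C] := corr_lincomb_le_Xn {ffun 'I_d.+1 -> 'I_N} (d.+1 * N).
exists C => t t_gt0; have zeta_t := zeta_window (c_out t).
rewrite zeta_axis zeta_t; apply: le_C; rewrite -?zeta_t //.
- exact: window_pt_inj.
- exact: l1dist_window_pt.
- exact: window_weight_rank.
Qed.

End Broadcast.

Lemma cvg0_sqr_dominated (R : realType) (u w : nat -> R) (C : R) :
  (forall t, (0 < t)%N -> u t ^+ 2 <= C * w t ^+ 2) -> w @ \oo --> 0 -> u @ \oo --> 0.
Proof.
move=> uw w0; pose k := Num.sqrt `|C|.
have u_le t : (0 < t)%N -> `|u t| <= k * `|w t|.
  move=> t_gt0; rewrite -ler_sqr ?nnegrE ?mulr_ge0 ?sqrtr_ge0 //.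
  rewrite exprMn sqr_sqrtr // !real_normK ?num_real //.
  exact: le_trans (uw t t_gt0) (ler_wpM2r (sqr_ge0 _) (ler_norm _)).
apply: norm_cvg0; apply: (squeeze_cvgr (f := cst 0) (h := fun t => k * `|w t|)).
- by exists 1%N => // t /= t_gt0; rewrite normr_ge0 u_le.
- exact: cvg_cst.
- by rewrite -(mulr0 k) -(normr0 R); apply: cvgM; [exact: cvg_cst | exact: cvg_norm].
Qed.

Theorem mainTheorem5 (R : realType) (d : nat) (alpha : nat -> R) :
  0 < alpha d.+1 ->
  (local_reconstruction d alpha <-> single_vertex_reconstruction d alpha).
Proof.
move=> a_gt0; split=> [[N [W [c [c_out [var_gt0 corr_ncvg0]]]]]|]; last by exists 1%N.
exists (axis_pt d), (@axis_coef R d); split; first exact: axis_coef_window.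
split=> [t|]; first by rewrite zeta_axis var_Xn_gt0.
have [C le_C] := corr_zeta_sqr_le_axis a_gt0 c_out var_gt0.
by move=> /(cvg0_sqr_dominated le_C).
Qed.
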